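(* Let $R$ be an integral domain, $n\ge2$, and $I$ a proper subset of $\{1,\ldots,n\}$. Then $\mathbf{U}_n(R)$ is the Hirsch–Plotkin radical of $\mathbf{S}^I_n(R)$, i.e. the unique maximal normal locally nilpotent subgroup of $\mathbf{S}^I_n(R)$. In particular, $\mathbf{U}_n(R)$ is a characteristic subgroup of $\mathbf{S}^I_n(R)$.
   Context: $\mathbf{S}^I_n(R)$ is the group of upper triangular $n\times n$ matrices over $R$ with diagonal entries in $U(R)$, the $j$-th diagonal entry equal to $1$ for $j\notin I$; $\mathbf{U}_n(R)$ is its subgroup of upper unitriangular matrices. *)

From HB Require Import structures.
From mathcomp Require Import all_boot all_order all_algebra.
Set Implicit Arguments. Unset Strict Implicit. Unset Printing Implicit Defensive.
Import GRing.Theory.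
Local Open Scope ring_scope.

Section MatGroups.
Variables (R : comUnitRingType) (n : nat).
Local Notation mx := 'M[R]_n.

Definition upper_tri (A : mx) : Prop := forall i j : 'I_n, (j < i)%N -> A i j = 0.

(* S^I_n(R): upper triangular, diagonal entries units, A j j = 1 for j \notin I
   (indices are 'I_n = {0,...,n-1} instead of {1,...,n}). *)
Definition Sgrp (I : {set 'I_n}) (A : mx) : Prop :=
  [/\ upper_tri A,
      forall i : 'I_n, A i i \is a GRing.unit &
      forall i : 'I_n, i \notin I -> A i i = 1].

Definition Ugrp (A : mx) : Prop := upper_tri A /\ forall i : 'I_n, A i i = 1.

Definition is_subgroup (G H : mx -> Prop) : Prop :=
  [/\ forall x, H x -> G x,
      H 1%:M,
      forall x y, H x -> H y -> H (x *m y) &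
      forall x, H x -> H (invmx x)].

Inductive gen (X : mx -> Prop) : mx -> Prop :=
| gen1 : gen X 1%:M
| genX x : X x -> gen X x
| genM x y : gen X x -> gen X y -> gen X (x *m y)
| genV x : gen X x -> gen X (invmx x).

Definition commx (x y : mx) : mx := invmx x *m invmx y *m x *m y.

(* lower central series: gamma_1 = H, gamma_{k+1} = [gamma_k, H] *)
Fixpoint lcs (H : mx -> Prop) (k : nat) : mx -> Prop :=
  match k with
  | 0 => H
  | k'.+1 => gen (fun z => exists x y, [/\ lcs H k' x, H y & z = commx x y])
  end.

Definition nilpotent_grp (H : mx -> Prop) : Prop :=
  exists c : nat, forall x, lcs H c x -> x = 1%:M.

Definition locally_nilpotent (H : mx -> Prop) : Prop :=
  forall s : seq mx, (forall x, x \in s -> H x) ->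
    nilpotent_grp (gen (fun x => x \in s)).

Definition is_normal (G H : mx -> Prop) : Prop :=
  is_subgroup G H /\
  forall g h, G g -> H h -> H (invmx g *m h *m g).

Definition hirsch_plotkin_radical (G H : mx -> Prop) : Prop :=
  [/\ is_normal G H, locally_nilpotent H &
      forall N, is_normal G N -> locally_nilpotent N -> forall x, N x -> H x].

Definition is_automorphism (G : mx -> Prop) (f : mx -> mx) : Prop :=
  [/\ forall x, G x -> G (f x),
      forall x y, G x -> G y -> f x = f y -> x = y,
      forall y, G y -> exists x, G x /\ f x = y &
      forall x y, G x -> G y -> f (x *m y) = f x *m f y].

Definition characteristic (G H : mx -> Prop) : Prop :=
  is_subgroup G H /\
  forall f, is_automorphism G f ->
    forall y, H y <-> exists x, H x /\ f x = y.

End MatGroups.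

From mathcomp Require Import all_boot all_order all_algebra.
From mathcomp Require Import zify ring.
Set Implicit Arguments. Unset Strict Implicit. Unset Printing Implicit Defensive.
Import GRing.Theory.
Local Open Scope ring_scope.

(* [U_n(R)] is filtered by the subgroups [unip k] of matrices [1 + X] with [X]
   supported on the superdiagonals of index at least [k]; commutators raise the
   level, so [U_n(R)] is nilpotent.  Conversely, let [x] lie in a normal locally
   nilpotent subgroup [N] of [S^I_n(R)].  If two consecutive diagonal entries of
   [x] differed, conjugating [x] by an elementary matrix [1 + e_(i,i+1)] would give
   [y] in [N] such that the iterated commutators [[..[[x, y], x], ..], x] all have
   a nonzero [(i, i+1)]-entry (as [R] is a domain), contradicting the nilpotency of
   [<x, y>].  So the diagonal of [x] is constant, hence [1] since [I] is proper.
   Automorphisms preserve normal locally nilpotent subgroups, so the largest one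
   is characteristic. *)

Lemma ord_succ_const (T : Type) (n : nat) (a : 'I_n -> T) :
  (forall i j : 'I_n, j = i.+1 :> nat -> a i = a j) -> forall i j : 'I_n, a i = a j.
Proof.
move=> a_succ.
have a_up m (i j : 'I_n) : j = (i + m)%N :> nat -> a i = a j.
  elim: m j => [|m IHm] j hj.
    by rewrite addn0 in hj; rewrite (val_inj hj).
  have lt_im : (i + m < n)%N by move: (ltn_ord j); rewrite [nat_of_ord j]hj addnS => /ltnW.
  by rewrite (IHm (Ordinal lt_im)) //; apply: a_succ; rewrite hj addnS.
move=> i j; have [le_ij|lt_ji] := leqP i j.
  by apply: (a_up (j - i)%N); rewrite subnKC.
by apply/esym/(a_up (i - j)%N); rewrite subnKC // ltnW.
Qed.

Lemma commutator_sub1 (V : pzRingType) (x y : V) :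
  (x - 1) * (y - 1) - (y - 1) * (x - 1) = x * y - y * x.
Proof.
rewrite !mulrBl !mulrBr !mul1r !mulr1 !opprB !addrA.
congr (_ - y * x).
by rewrite (addrAC _ (-1) y) (addrAC _ x y) subrK (addrAC _ 1 x) subrK addrK.
Qed.

Section Subgroups.
Variables (R : comUnitRingType) (n : nat).
Local Notation mx := 'M[R]_n.
Implicit Types (G H X : mx -> Prop).

Lemma gen_min X H : (forall x, X x -> H x) -> H 1%:M ->
    (forall x y, H x -> H y -> H (x *m y)) -> (forall x, H x -> H (invmx x)) ->
  forall x, gen X x -> H x.
Proof. by move=> XH H1 HM HV x; elim=> //; auto. Qed.

Lemma subgroup_gen_sub G H X : is_subgroup G H -> (forall x, X x -> H x) ->
  forall x, gen X x -> H x.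
Proof. by case=> _ H1 HM HV XH; apply: gen_min. Qed.

Lemma subgroup_commx G H x y : is_subgroup G H -> H x -> H y -> H (commx x y).
Proof. by case=> _ _ HM HV hx hy; apply/HM/hy/HM/hx/HM; apply: HV. Qed.

Lemma lcs_sub G H N : is_subgroup G N -> (forall x, H x -> N x) ->
  forall c x, lcs H c x -> N x.
Proof.
move=> sgN HN; elim=> [|c IHc] x /=; first exact: HN.
apply: (subgroup_gen_sub sgN) => _ [a [b [ha hb ->]]].
by apply: (subgroup_commx sgN); [apply: IHc | apply: HN].
Qed.

End Subgroups.

Section UpperBand.
Variables (R : pzRingType) (n : nat).
Local Notation mx := 'M[R]_n.

Definition upper_band (k : nat) (A : mx) : Prop :=
  forall i j : 'I_n, (j < i + k)%N -> A i j = 0.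

Lemma upper_band0 k : upper_band k (0 : mx).
Proof. by move=> i j _; rewrite mxE. Qed.

Lemma upper_bandW k l (A : mx) : (l <= k)%N -> upper_band k A -> upper_band l A.
Proof. by move=> le_lk hA i j hij; apply: hA; lia. Qed.

Lemma upper_bandD k (A B : mx) : upper_band k A -> upper_band k B -> upper_band k (A + B).
Proof. by move=> hA hB i j hij; rewrite !mxE hA ?hB ?addr0. Qed.

Lemma upper_bandN k (A : mx) : upper_band k A -> upper_band k (- A).
Proof. by move=> hA i j hij; rewrite !mxE hA ?oppr0. Qed.

Lemma upper_bandB k (A B : mx) : upper_band k A -> upper_band k B -> upper_band k (A - B).
Proof. by move=> hA hB; apply/upper_bandD/upper_bandN. Qed.

Lemma upper_bandM k l (A B : mx) :
  upper_band k A -> upper_band l B -> upper_band (k + l) (A *m B).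
Proof.
move=> hA hB i j hij; rewrite !mxE big1 // => m _.
have [lt_mk|le_km] := ltnP m (i + k); first by rewrite hA // mul0r.
by rewrite hB ?mulr0 //; lia.
Qed.

Lemma upper_bandX k m (A : mx) : upper_band k A -> upper_band (k * m) (A ^+ m).
Proof.
move=> hA; elim: m => [|m IHm].
  by rewrite muln0 expr0 => i j; rewrite addn0 mxE; case: eqP => // ->; rewrite ltnn.
by rewrite exprS -mulmxE mulnS; apply: upper_bandM.
Qed.

Lemma upper_band_sum k m (F : 'I_m -> mx) :
  (forall i, upper_band k (F i)) -> upper_band k (\sum_(i < m) F i).
Proof.
by move=> hF; elim/big_ind: _ => //; [apply: upper_band0 | apply: upper_bandD].
Qed.

Lemma upper_band_eq0 k (A : mx) : (n <= k)%N -> upper_band k A -> A = 0.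
Proof. by move=> le_nk hA; apply/matrixP => i j; rewrite mxE hA //; have := ltn_ord j; lia. Qed.

Lemma upper_band_diag (d : 'rV[R]_n) : upper_band 0 (diag_mx d).
Proof. by move=> i j; rewrite addn0 mxE; case: eqP => [->|]; rewrite ?ltnn ?mulr0n. Qed.

Lemma mulmx_diag (A B : mx) (i : 'I_n) :
  upper_band 0 A -> upper_band 0 B -> (A *m B) i i = A i i * B i i.
Proof.
move=> hA hB; rewrite mxE (bigD1 i) //= big1 ?addr0 // => m ne_mi.
have [lt_mi|le_im] := ltnP m i; first by rewrite hA ?mul0r // addn0.
by rewrite hB ?mulr0 // addn0 ltn_neqAle le_im andbT eq_sym.
Qed.

Lemma mulmx_superdiag (A B : mx) (i0 i1 : 'I_n) : i1 = i0.+1 :> nat ->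
  upper_band 0 A -> upper_band 0 B ->
  (A *m B) i0 i1 = A i0 i0 * B i0 i1 + A i0 i1 * B i1 i1.
Proof.
move=> i01 hA hB; have ne01 : i0 != i1 by apply/eqP => e; move: i01; rewrite e; lia.
rewrite mxE (bigD1 i0) //= (bigD1 i1) /=; last by rewrite eq_sym.
rewrite big1 ?addr0 // => m /andP[ne_m0 ne_m1].
have [lt_m0|le_0m] := ltnP m i0; first by rewrite hA ?mul0r // addn0.
rewrite hB ?mulr0 // addn0.
by move: le_0m ne_m0 ne_m1; rewrite -!(inj_eq (@ord_inj _)) i01; lia.
Qed.

End UpperBand.

Section Unipotent.
Variables (R : comUnitRingType) (n : nat).
Local Notation mx := 'M[R]_n.

Lemma upper_triE (A : mx) : upper_tri A <-> upper_band 0 A.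
Proof. by split=> hA i j hij; apply: hA; rewrite ?addn0 in hij *. Qed.

Lemma mulmx_geometric_series (X : mx) :
  upper_band 1 X -> (1%:M - X) *m (\sum_(i < n) X ^+ i) = 1%:M.
Proof.
move=> hX; have Xn0 : X ^+ n = 0.
  by apply: (upper_band_eq0 (k := 1 * n)); [rewrite mul1n | apply: upper_bandX].
by rewrite -opprB mulNmx mulmxE -subrX1 Xn0 sub0r opprK idmxE.
Qed.

Lemma invmx_upper (g : mx) : upper_band 0 g -> (forall i, g i i \is a GRing.unit) ->
  [/\ g \in unitmx, upper_band 0 (invmx g) & forall i, invmx g i i = (g i i)^-1].
Proof.
move=> hg g_unit; pose Dinv := diag_mx (\row_i (g i i)^-1).
pose X := 1%:M - Dinv *m g.
have hX : upper_band 1 X.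
  move=> i j hij; rewrite /X mul_diag_mx !mxE.
  have [<-|ne_ij] := eqVneq i j; first by rewrite mulVr // subrr.
  rewrite (hg i j) ?mulr0 ?subr0 //; move: ne_ij hij; rewrite -(inj_eq (@ord_inj _)); lia.
have left_inv : ((\sum_(i < n) X ^+ i) *m Dinv) *m g = 1%:M.
  have DgE : Dinv *m g = 1%:M - X by rewrite /X opprB addrC subrK.
  by rewrite -mulmxA DgE mulmx1C // mulmx_geometric_series.
have [_ g_unitmx] := mulmx1_unit left_inv.
have invg : invmx g = (\sum_(i < n) X ^+ i) *m Dinv.
  by rewrite -[invmx g]mul1mx -left_inv -(mulmxA _ g) mulmxV // mulmx1.
have inv_upper : upper_band 0 (invmx g).
  rewrite invg -[0%N]/(0 + 0)%N; apply: upper_bandM; last exact: upper_band_diag.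
  by apply: upper_band_sum => i; apply: (upper_bandW (k := 1 * i)) => //; apply: upper_bandX.
split=> // i; have := mulmx_diag i inv_upper hg.
rewrite mulVmx // mxE eqxx /= => /esym gi.
by rewrite -[invmx g i i]mulr1 -(mulrV (g_unit i)) mulrA gi mul1r.
Qed.

Definition unip (k : nat) (A : mx) : Prop := upper_band k (A - 1%:M).

Lemma unip_upper k (A : mx) : (0 < k)%N -> unip k A -> upper_band 0 A /\ forall i, A i i = 1.
Proof.
move=> k_gt0 hA; split=> [i j hij|i].
  have := hA i j; rewrite !mxE; case: eqVneq => [eq_ij|_]; first by move: hij; rewrite eq_ij; lia.
  by rewrite subr0; apply; lia.
by apply/eqP; rewrite -subr_eq0; have := hA i i; rewrite !mxE eqxx => ->; rewrite ?addn0 //; lia.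
Qed.

Lemma UgrpE (A : mx) : Ugrp A <-> unip 1 A.
Proof.
split=> [[/upper_triE hA diagA] i j hij|/(unip_upper (ltnSn 0)) [/upper_triE hA diagA] //].
rewrite !mxE; have [<-|ne_ij] := eqVneq i j; first by rewrite diagA subrr.
rewrite hA ?subrr //; move: ne_ij hij; rewrite -(inj_eq (@ord_inj _)); lia.
Qed.

Lemma unip_invmx k (A : mx) : (0 < k)%N -> unip k A ->
  A \in unitmx /\ upper_band 0 (invmx A).
Proof.
move=> k_gt0 /(unip_upper k_gt0) [hA diagA].
have [|A_unit inv_upper _] := invmx_upper hA; last by [].
by move=> i; rewrite diagA unitr1.
Qed.

Lemma unip1 k : unip k (1%:M : mx).
Proof. by rewrite /unip subrr; apply: upper_band0. Qed.

Lemma unipM k (A B : mx) : (0 < k)%N -> unip k A -> unip k B -> unip k (A *m B).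
Proof.
move=> k_gt0 hA hB; rewrite /unip.
have -> : A *m B - 1%:M = (A - 1%:M) *m (B - 1%:M) + (A - 1%:M) + (B - 1%:M).
  rewrite mulmxBl !mulmxBr !mul1mx !mulmx1.
  by rewrite addrAC subrK addrA subrK.
apply/upper_bandD/hB/upper_bandD/hA; apply: (upper_bandW (k := k + k)); first lia.
exact: upper_bandM.
Qed.

Lemma unipV k (A : mx) : (0 < k)%N -> unip k A -> unip k (invmx A).
Proof.
move=> k_gt0 hA; rewrite /unip; have [A_unit inv_upper] := unip_invmx k_gt0 hA.
have -> : invmx A - 1%:M = - ((A - 1%:M) *m invmx A).
  by rewrite mulmxBl mul1mx mulmxV // opprB.
by apply: upper_bandN; rewrite -[k]addn0; apply: upper_bandM.
Qed.

Lemma unip_commx k (x y : mx) : (0 < k)%N -> unip k x -> unip 1 y -> unip k.+1 (commx x y).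
Proof.
move=> k_gt0 hx hy; rewrite /unip.
have [x_unit xV_upper] := unip_invmx k_gt0 hx.
have [y_unit yV_upper] := unip_invmx (ltnSn 0) hy.
have -> : commx x y - 1%:M = invmx x *m invmx y *m
    ((x - 1%:M) *m (y - 1%:M) - (y - 1%:M) *m (x - 1%:M)).
  have xyK : invmx x *m invmx y *m (y *m x) = 1%:M.
    by rewrite -mulmxA (mulmxA (invmx y)) mulVmx // mul1mx mulVmx.
  by rewrite !mulmxE idmxE commutator_sub1 -!mulmxE mulmxBr xyK /commx !mulmxA.
apply: (upper_bandW (k := 0 + 0 + (k + 1))); first lia.
apply: upper_bandM; first exact: upper_bandM.
by apply: upper_bandB; [|rewrite addnC]; apply: upper_bandM.
Qed.

Lemma lcs_unip (H : mx -> Prop) : (forall x, H x -> Ugrp x) ->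
  forall c x, lcs H c x -> unip c.+1 x.
Proof.
move=> HU; elim=> [|c IHc] x /=; first by move/HU/UgrpE.
elim=> [||{}x y _ hx _ hy|{}x _ hx]; [exact: unip1| |exact: unipM|exact: unipV].
by move=> _ [a [b [ha /HU/UgrpE hb ->]]]; apply: unip_commx => //; apply: IHc.
Qed.

Lemma Ugrp_subgroup : is_subgroup (@Ugrp R n) (@Ugrp R n).
Proof.
split=> // [|x y /UgrpE hx /UgrpE hy|x /UgrpE hx]; apply/UgrpE.
- exact: unip1.
- exact: unipM.
- exact: unipV.
Qed.

Lemma Ugrp_locally_nilpotent : locally_nilpotent (@Ugrp R n).
Proof.
move=> s sU; exists n => x /lcs_unip lcs_x; apply/eqP; rewrite -subr_eq0; apply/eqP.
apply: (upper_band_eq0 (k := n.+1)) => //; apply: lcs_x.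
exact: subgroup_gen_sub Ugrp_subgroup sU.
Qed.

Lemma Ugrp_elem (i0 i1 : 'I_n) : (i0 < i1)%N -> Ugrp (1%:M + delta_mx i0 i1 : mx) /\
  (1%:M + delta_mx i0 i1 : mx) i0 i1 = 1.
Proof.
move=> lt01; split; last first.
  by rewrite !mxE !eqxx; case: eqVneq lt01 => [->|]; rewrite ?ltnn ?add0r.
split=> [i j lt_ji|i]; rewrite !mxE.
  have /negPf -> : i != j by apply: contraTneq lt_ji => ->; rewrite ltnn.
  rewrite add0r; case: eqVneq => [eq_i0|]; case: eqVneq => [eq_j1|] //=.
  by move: lt_ji lt01; rewrite eq_i0 eq_j1; lia.
rewrite eqxx; case: eqVneq => [eq_i0|]; case: eqVneq => [eq_i1|] //= *; rewrite ?addr0 //.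
by move: lt01; rewrite -eq_i0 -eq_i1 ltnn.
Qed.

End Unipotent.



Section TriangularGroup.
Variables (R : comUnitRingType) (n : nat) (I : {set 'I_n}).
Local Notation mx := 'M[R]_n.
Local Notation S := (@Sgrp R n I).

Lemma Sgrp_unitmx g : S g -> g \in unitmx.
Proof. by case=> /upper_triE hg g_unit _; case: (invmx_upper hg g_unit). Qed.

Lemma Sgrp1 : S 1%:M.
Proof.
split=> [i j lt_ji|i|i _]; rewrite mxE ?eqxx ?unitr1 //.
by case: eqP lt_ji => // ->; rewrite ltnn.
Qed.

Lemma SgrpM g h : S g -> S h -> S (g *m h).
Proof.
case=> /upper_triE hg g_unit g1 [/upper_triE hh h_unit h1].
split=> [|i|i iNI]; rewrite ?mulmx_diag ?unitrM ?g_unit ?h_unit ?g1 ?h1 ?mulr1 //.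
by apply/upper_triE; rewrite -[0%N]/(0 + 0)%N; apply: upper_bandM.
Qed.

Lemma SgrpV g : S g -> S (invmx g).
Proof.
case=> /upper_triE hg g_unit g1; have [_ inv_upper invE] := invmx_upper hg g_unit.
by split=> [|i|i iNI]; rewrite ?invE ?unitrV ?g_unit ?g1 ?invr1 //; apply/upper_triE.
Qed.

Lemma Sgrp_upper g : S g -> upper_band 0 g.
Proof. by case=> /upper_triE. Qed.

Local Hint Resolve Sgrp1 SgrpM SgrpV Sgrp_upper : core.

Lemma Sgrp_subgroup : is_subgroup S S.
Proof. by split; auto. Qed.

Lemma Ugrp_Sgrp x : Ugrp x -> S x.
Proof. by case=> hx x1; split=> // i; rewrite x1 ?unitr1. Qed.

Lemma mulmx_commx (x y : mx) : x \in unitmx -> y \in unitmx -> x *m y = y *m x *m commx x y.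
Proof. by move=> xu yu; rewrite /commx !mulmxA -(mulmxA y) mulmxV // mulmx1 mulmxV // mul1mx. Qed.

Lemma Sgrp_mulmx_diag (g h : mx) (i : 'I_n) : S g -> S h -> (g *m h) i i = g i i * h i i.
Proof. by case=> /upper_triE hg _ _ [/upper_triE hh _ _]; apply: mulmx_diag. Qed.

Lemma Sgrp_mulmx_superdiag (g h : mx) (i0 i1 : 'I_n) : i1 = i0.+1 :> nat -> S g -> S h ->
  (g *m h) i0 i1 = g i0 i0 * h i0 i1 + g i0 i1 * h i1 i1.
Proof. by move=> i01 /Sgrp_upper hg /Sgrp_upper hh; apply: mulmx_superdiag. Qed.

Lemma Sgrp_invmx_diag (g : mx) (i : 'I_n) : S g -> invmx g i i = (g i i)^-1.
Proof. by case=> /upper_triE hg g_unit _; case: (invmx_upper hg g_unit). Qed.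

Lemma commx_diag (x y : mx) (i : 'I_n) : S x -> S y -> commx x y i i = 1.
Proof.
move=> hx hy; have [_ x_unit _] := hx; have [_ y_unit _] := hy.
rewrite /commx !Sgrp_mulmx_diag ?Sgrp_invmx_diag; auto.
by rewrite mulrAC divrK // mulVr.
Qed.

Lemma Ugrp_normal : is_normal S (@Ugrp R n).
Proof.
split; first by case: (Ugrp_subgroup R n) => _ U1 UM UV; split=> //; apply: Ugrp_Sgrp.
move=> g h hg hh; have [_ g_unit _] := hg; have [_ h1] := hh.
have hS := Ugrp_Sgrp hh; have [conj_upper _ _] : S (invmx g *m h *m g) by auto.
by split=> // i; rewrite !Sgrp_mulmx_diag ?Sgrp_invmx_diag ?h1 ?mulr1 ?mulVr; auto.
Qed.

Lemma commx_superdiag (x y : mx) (i0 i1 : 'I_n) : i1 = i0.+1 :> nat -> S x -> S y ->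
  y i0 i0 * x i0 i0 * commx x y i0 i1 =
  x i0 i0 * y i0 i1 + x i0 i1 * y i1 i1 - (y i0 i0 * x i0 i1 + y i0 i1 * x i1 i1).
Proof.
move=> i01 hx hy; have hc : S (commx x y) by rewrite /commx; auto.
have := congr1 (fun A : mx => A i0 i1) (mulmx_commx (Sgrp_unitmx hx) (Sgrp_unitmx hy)).
rewrite /= !(Sgrp_mulmx_superdiag i01) ?commx_diag ?Sgrp_mulmx_diag; auto.
by move=> ->; ring.
Qed.


Lemma intertwine_superdiag (E x y : mx) (i0 i1 : 'I_n) : i1 = i0.+1 :> nat ->
  Ugrp E -> E i0 i1 = 1 -> S x -> S y -> E *m y = x *m E ->
  [/\ y i0 i0 = x i0 i0, y i1 i1 = x i1 i1 & y i0 i1 = x i0 i0 + x i0 i1 - x i1 i1].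
Proof.
move=> i01 hE E01 hx hy Ey; have [_ E1] := hE; have {}hE := Ugrp_Sgrp hE.
have Eij i j := congr1 (fun A : mx => A i j) Ey; rewrite /= in Eij.
have yii i : y i i = x i i.
  by have := Eij i i; rewrite !Sgrp_mulmx_diag // E1 mul1r mulr1.
split=> //; have := Eij i0 i1; rewrite !(Sgrp_mulmx_superdiag i01) // !E1 E01 yii.
by rewrite !mul1r !mulr1 => <-; rewrite addrK.
Qed.

End TriangularGroup.

Section HirschPlotkin.
Variables (R : idomainType) (n : nat) (I : {set 'I_n}).
Local Notation mx := 'M[R]_n.
Local Notation S := (@Sgrp R n I).

(* The [(i0, i1)]-entry of [[x, y]] is [(x i0 i0 - x i1 i1)^2 / (x i0 i0 * y i0 i0)],
   and each further commutation with [x] multiplies it by [(x i1 i1 - x i0 i0) / x i0 i0]. *)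
Lemma lcs_superdiag_neq0 (x y : mx) (i0 i1 : 'I_n) : i1 = i0.+1 :> nat -> S x -> S y ->
  [/\ y i0 i0 = x i0 i0, y i1 i1 = x i1 i1 & y i0 i1 = x i0 i0 + x i0 i1 - x i1 i1] ->
  x i0 i0 != x i1 i1 ->
  forall j, exists2 z, lcs (gen (fun z => z \in [:: x; y])) j.+1 z & z i0 i1 != 0.
Proof.
move=> i01 hx hy [y00 y11 y01] x0N1; set H := gen _.
have genH : forall z, z \in [:: x; y] -> H z by move=> z; apply: genX.
have lcsS j z : lcs H j z -> S z.
  apply: (lcs_sub (Sgrp_subgroup R I)); apply: (subgroup_gen_sub (Sgrp_subgroup R I)).
  by move=> w; rewrite !inE => /orP[] /eqP->.
suff: forall j, exists z, [/\ lcs H j.+1 z, z i0 i0 = z i1 i1 & z i0 i1 != 0].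
  by move=> + j => /(_ j) [z [lcs_z _ z01]]; exists z.
elim=> [|j [z [lcs_z z00 z01]]].
  exists (commx x y); split.
  - by apply: genX; exists x, y; split=> //=; apply: genH; rewrite !inE eqxx ?orbT.
  - by rewrite !(commx_diag _ hx hy).
  apply/eqP => c01; have := commx_superdiag i01 hx hy; rewrite c01 mulr0 y00 y11 y01.
  have -> : x i0 i0 * (x i0 i0 + x i0 i1 - x i1 i1) + x i0 i1 * x i1 i1 -
      (x i0 i0 * x i0 i1 + (x i0 i0 + x i0 i1 - x i1 i1) * x i1 i1) =
      (x i0 i0 - x i1 i1) ^+ 2 by ring.
  by move/esym/eqP; rewrite sqrf_eq0 subr_eq0 (negPf x0N1).
have hz := lcsS _ _ lcs_z.
exists (commx z x); split.
- by apply: genX; exists z, x; split=> //; apply: genH; rewrite inE eqxx.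
- by rewrite !(commx_diag _ hz hx).
apply/eqP => c01; have := commx_superdiag i01 hz hx; rewrite c01 mulr0 z00.
have -> : z i1 i1 * x i0 i1 + z i0 i1 * x i1 i1 - (x i0 i0 * z i0 i1 + x i0 i1 * z i1 i1) =
    z i0 i1 * (x i1 i1 - x i0 i0) by ring.
by move/esym/eqP; rewrite mulf_eq0 (negPf z01) subr_eq0 eq_sym (negPf x0N1).
Qed.

Section NormalLocallyNilpotent.
Variable N : mx -> Prop.
Hypotheses (N_normal : is_normal S N) (N_locnil : locally_nilpotent N).

Lemma normal_locally_nilpotent_superdiag x : N x ->
  forall i0 i1 : 'I_n, i1 = i0.+1 :> nat -> x i0 i0 = x i1 i1.
Proof.
move=> Nx i0 i1 i01; have [[NS _ _ _] N_conj] := N_normal.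
apply/eqP/negPn/negP => x0N1; have lt01 : (i0 < i1)%N by rewrite i01.
have [EU E01] := Ugrp_elem R lt01; set E := _ + _ in EU E01.
have ES := Ugrp_Sgrp I EU; have E_unit := Sgrp_unitmx ES.
have Ny : N (invmx E *m x *m E) by apply: N_conj.
have Ey : E *m (invmx E *m x *m E) = x *m E by rewrite !mulmxA mulmxV // mul1mx.
have yE := intertwine_superdiag i01 EU E01 (NS _ Nx) (NS _ Ny) Ey.
have sN : forall z, z \in [:: x; invmx E *m x *m E] -> N z.
  by move=> z; rewrite !inE => /orP[] /eqP->.
have [[|c] lcs_c] := N_locnil sN.
  by move: x0N1; rewrite (lcs_c x) ?mxE ?eqxx //; apply: genX; rewrite inE eqxx.
have [z lcs_z] := lcs_superdiag_neq0 i01 (NS _ Nx) (NS _ Ny) yE x0N1 c.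
have i0N1 : i0 != i1 by apply: contraTneq lt01 => ->; rewrite ltnn.
by rewrite (lcs_c z lcs_z) mxE (negPf i0N1) eqxx.
Qed.

Lemma normal_locally_nilpotent_Ugrp x : I \proper [set: 'I_n] -> N x -> Ugrp x.
Proof.
move=> /properP[_ [j _ jNI]] Nx; have [[NS _ _ _] _] := N_normal.
have [x_upper _ x1] := NS _ Nx; split=> // i.
have diag_const := ord_succ_const (normal_locally_nilpotent_superdiag Nx).
by rewrite (diag_const i j) x1.
Qed.

End NormalLocallyNilpotent.

End HirschPlotkin.

Lemma seq_lift (T : eqType) (P : T -> Prop) (f : T -> T) (s : seq T) :
  (forall z, z \in s -> exists x, P x /\ f x = z) ->
  exists2 s', forall x, x \in s' -> P x & map f s' = s.
Proof.
elim: s => [|z s IHs] hs; first by exists [::].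
have [x [Px <-]] := hs z (mem_head z s).
have [|s' Ps' <-] := IHs; first by move=> w ws; apply: hs; rewrite inE ws orbT.
by exists (x :: s') => // w; rewrite inE => /orP[/eqP->|/Ps'].
Qed.

Section Characteristic.
Variables (R : comUnitRingType) (n : nat) (G : 'M[R]_n -> Prop).
Local Notation mx := 'M[R]_n.
Hypotheses (G_subgroup : is_subgroup G G) (G_unit : forall x, G x -> x \in unitmx).
Variable f : mx -> mx.
Hypothesis f_aut : is_automorphism G f.

Let G1 : G 1%:M. Proof. by case: G_subgroup. Qed.
Let GM x y : G x -> G y -> G (x *m y). Proof. by case: G_subgroup => _ _ GM _; apply: GM. Qed.
Let GV x : G x -> G (invmx x). Proof. by case: G_subgroup => _ _ _ GV; apply: GV. Qed.
Let fG x : G x -> G (f x). Proof. by case: f_aut => fG _ _ _; apply: fG. Qed.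
Let fM x y : G x -> G y -> f (x *m y) = f x *m f y. Proof. by case: f_aut => _ _ _; apply. Qed.

Lemma aut1 : f 1%:M = 1%:M.
Proof.
have f1_unit := G_unit (fG G1).
by apply: (can_inj (mulKmx f1_unit)); rewrite -fM // !mulmx1.
Qed.

Lemma autV x : G x -> f (invmx x) = invmx (f x).
Proof.
move=> Gx; have fx_unit := G_unit (fG Gx); have x_unit := G_unit Gx.
apply: (can_inj (mulKmx fx_unit)); rewrite -fM ?mulmxV ?aut1 //; exact: GV.
Qed.

Lemma autC x y : G x -> G y -> f (commx x y) = commx (f x) (f y).
Proof. by move=> Gx Gy; rewrite /commx !fM ?autV; auto. Qed.

Lemma gen_aut_image (X Y : mx -> Prop) : (forall x, X x -> G x) ->
  (forall z, Y z <-> exists2 w, X w & f w = z) ->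
  forall z, gen Y z <-> exists w, [/\ gen X w, G w & f w = z].
Proof.
move=> XG YE z; split.
  elim=> [|{}z /YE[w Xw <-]|a b _ [a' [ga Ga <-]] _ [b' [gb Gb <-]]|a _ [a' [ga Ga <-]]].
  - by exists 1%:M; rewrite aut1; split=> //; apply: gen1.
  - by exists w; split=> //; [apply: genX | apply: XG].
  - by exists (a' *m b'); rewrite fM //; split=> //; [apply: genM | apply: GM].
  - by exists (invmx a'); rewrite autV //; split=> //; [apply: genV | apply: GV].
have genG : forall w, gen X w -> G w := subgroup_gen_sub G_subgroup XG.
case=> w [gw _ <-]; elim: gw => [|{}w Xw|a b ga IHa gb IHb|a ga IHa].
- by rewrite aut1; apply: gen1.
- by apply/genX/YE; exists w.
- by have Ga := genG _ ga; have Gb := genG _ gb; rewrite fM //; apply: genM.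
- by have Ga := genG _ ga; rewrite autV //; apply: genV.
Qed.

Lemma lcs_aut_image (X Y : mx -> Prop) : (forall x, X x -> G x) ->
  (forall z, Y z <-> exists2 w, X w & f w = z) ->
  forall j z, lcs (gen Y) j z <-> exists w, [/\ lcs (gen X) j w, G w & f w = z].
Proof.
move=> XG YE; have genG : forall w, gen X w -> G w := subgroup_gen_sub G_subgroup XG.
elim=> [|j IHj] z /=; first exact: gen_aut_image.
apply: gen_aut_image => [_ [a [b [la gb ->]]]|{}z].
  by apply: (subgroup_commx G_subgroup); [apply: (lcs_sub G_subgroup genG la) | apply: genG].
split=> [[a [b [/IHj[a' [la' Ga <-]] /(gen_aut_image XG YE)[b' [gb' Gb <-]] ->]]]|].
  by exists (commx a' b'); [exists a', b' | rewrite autC].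
case=> _ [a [b [la gb ->]]] <-; have Ga := lcs_sub G_subgroup genG la; have Gb := genG _ gb.
exists (f a), (f b); rewrite autC //; split=> //.
  by apply/IHj; exists a.
by apply/(gen_aut_image XG YE); exists b.
Qed.

Section AutNormal.
Variable H : mx -> Prop.
Hypothesis H_normal : is_normal G H.

Let HG x : H x -> G x. Proof. by case: H_normal => -[HG _ _ _] _; apply: HG. Qed.
Let H1 : H 1%:M. Proof. by case: H_normal => -[]. Qed.
Let HM x y : H x -> H y -> H (x *m y). Proof. by case: H_normal => -[_ _ HM _] _; apply: HM. Qed.
Let HV x : H x -> H (invmx x). Proof. by case: H_normal => -[_ _ _ HV] _; apply: HV. Qed.
Let H_conj g h : G g -> H h -> H (invmx g *m h *m g). Proof. by case: H_normal => _; apply. Qed.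

Lemma aut_image_normal : is_normal G (fun y => exists x, H x /\ f x = y).
Proof.
split; first split.
- by move=> _ [x [Hx <-]]; apply/fG/HG.
- by exists 1%:M; rewrite aut1.
- move=> _ _ [x [Hx <-]] [y [Hy <-]].
  by exists (x *m y); split; [apply: HM | apply: fM; apply: HG].
- by move=> _ [x [Hx <-]]; exists (invmx x); split; [apply: HV | apply/autV/HG].
move=> g _ Gg [h [Hh <-]]; have [_ _ f_onto _] := f_aut; have [g' [Gg' <-]] := f_onto g Gg.
by exists (invmx g' *m h *m g'); rewrite !fM ?autV; auto.
Qed.

Lemma aut_preimage_normal : is_normal G (fun x => G x /\ H (f x)).
Proof.
split; first split.
- by move=> x [].
- by rewrite aut1.
- by move=> x y [Gx Hx] [Gy Hy]; rewrite fM; auto.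
- by move=> x [Gx Hx]; rewrite autV; auto.
by move=> g h Gg [Gh Hh]; rewrite !fM ?autV; auto.
Qed.

End AutNormal.

Lemma aut_image_locally_nilpotent (H : mx -> Prop) : (forall x, H x -> G x) ->
  locally_nilpotent H -> locally_nilpotent (fun y => exists x, H x /\ f x = y).
Proof.
move=> HG H_locnil s sH; have [s' s'H <-] := seq_lift sH.
have s'G x : x \in s' -> G x by move/s'H/HG.
have [c lcs_c] := H_locnil s' s'H; exists c => _ /(lcs_aut_image s'G) [|w [lw _ <-]].
  by move=> z; split=> [/mapP[w ws ->]|[w ws <-]]; [exists w | apply: map_f].
by rewrite (lcs_c w lw) aut1.
Qed.

Lemma aut_preimage_locally_nilpotent (H : mx -> Prop) :
  locally_nilpotent H -> locally_nilpotent (fun x => G x /\ H (f x)).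
Proof.
move=> H_locnil s sGH; have sG x : x \in s -> G x by case/sGH.
have [|c lcs_c] := H_locnil (map f s); first by move=> _ /mapP[x /sGH[_ Hfx] ->].
exists c => w lw; have [_ f_inj _ _] := f_aut.
have Gw : G w.
  by apply: (lcs_sub G_subgroup (subgroup_gen_sub G_subgroup sG)) lw.
apply: f_inj => //; rewrite aut1; apply: lcs_c; apply/(lcs_aut_image sG).
  by move=> z; split=> [/mapP[x xs ->]|[x xs <-]]; [exists x | apply: map_f].
by exists w.
Qed.

End Characteristic.

Lemma hirsch_plotkin_radical_characteristic (R : comUnitRingType) (n : nat)
    (G H : 'M[R]_n -> Prop) :
  is_subgroup G G -> (forall x, G x -> x \in unitmx) ->
  hirsch_plotkin_radical G H -> characteristic G H.
Proof.
move=> G_subgroup G_unit [H_normal H_locnil H_max]; split; first by case: H_normal.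
move=> f f_aut y; have [[HG _ _ _] _] := H_normal.
split=> [Hy|].
  have [fG _ f_onto _] := f_aut; have [x [Gx fx]] := f_onto y (HG y Hy).
  exists x; split=> //; apply: (H_max (fun x => G x /\ H (f x))); rewrite ?fx //.
    exact: aut_preimage_normal.
  exact: aut_preimage_locally_nilpotent.
move=> fHy; apply: (H_max (fun y => exists x, H x /\ f x = y)) fHy.
  exact: aut_image_normal.
exact: (aut_image_locally_nilpotent G_subgroup G_unit f_aut HG H_locnil).
Qed.

Theorem mainTheorem7 (R : idomainType) (n : nat) (I : {set 'I_n}) :
  (2 <= n)%N -> I \proper [set: 'I_n] ->
  hirsch_plotkin_radical (Sgrp I) (@Ugrp R n) /\
  characteristic (Sgrp I) (@Ugrp R n).
Proof.
move=> _ I_proper.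
have U_radical : hirsch_plotkin_radical (Sgrp I) (@Ugrp R n).
  split; [exact: Ugrp_normal | exact: Ugrp_locally_nilpotent |].
  move=> N N_normal N_locnil x.
  exact: (normal_locally_nilpotent_Ugrp N_normal N_locnil I_proper).
split=> //; apply: hirsch_plotkin_radical_characteristic U_radical.
  exact: Sgrp_subgroup.
exact: Sgrp_unitmx.
Qed.
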